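(* Let $\{\rho_n\}_{n\ge0},\{\beta_n\}_{n\ge0},\{\tau_n\}_{n\ge0}$ be complex sequences with $\rho_n\ne0$, $\tau_n\neq0$ for $n\ge0$, $\beta_0\neq0,\pm1$, $\beta_n\neq0$ for $n\ge1$. Let $\mathcal{P}_0(\lambda)=1$, $\mathcal{P}_1(\lambda)=\rho_0(\lambda-\beta_0)$ and $\mathcal{P}_{n+1}(\lambda)=\rho_n(\lambda-\beta_n)\mathcal{P}_n(\lambda)+\tau_n\lambda\,\mathcal{P}_{n-1}(\lambda)$ for $n\ge1$. Let $\{\alpha_n\}_{n\ge0}$ be nonzero real numbers with $\alpha_0=\tau_0\rho_0^{-1}$, $\alpha_1\neq\rho_0\beta_0$ and $$\alpha_n=-(\rho_{n-1}-\alpha_{n-1}^{-1}\tau_{n-1})+\rho_{n-1}\beta_{n-1},\quad n\ge2,$$ and put $\mathcal{Q}_0(\lambda)=1$, $\mathcal{Q}_n(\lambda)=\mathcal{P}_n(\lambda)+\alpha_n\mathcal{P}_{n-1}(\lambda)$, $n\ge1$. With $p_n=\alpha_{n-1}\rho_{n-1}-\tau_{n-1}$ and $q_n=\alpha_{n-1}(\alpha_n-\rho_{n-1}\beta_{n-1})$, assume $p_{n+1}\neq0$ and $q_n\neq0$ for all $n\ge1$. Suppose $\mathcal{Q}_1(1)=0$. Then $\mathcal{Q}_n(\lambda)$ has a common zero at $\lambda=1$ for all $n\ge2$, with $\mathcal{Q}_2(\lambda)$ having a double zero at $\lambda=1$ if $\alpha_1\,(\neq\rho_0\beta_0)$ is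 a root of the quadratic equation $\rho_1x^2-\rho_0\beta_0\tau_1=0$. However, if $\mathcal{Q}_2(\lambda)$ does not have a double zero at $\lambda=1$, then for every $n\ge2$, $\mathcal{Q}_n(\lambda)$ and $\mathcal{Q}_{n-1}(\lambda)$ have no common zero except at $\lambda=1$.
   Context: Standing assumptions of the paper in this setting: $p_{n+1}\neq0$, $q_n\neq0$ for $n\ge1$. *)

From HB Require Import structures.
From mathcomp Require Import all_boot all_order all_algebra.
From mathcomp Require Import complex.
From mathcomp Require Import Rstruct.
Set Implicit Arguments. Unset Strict Implicit. Unset Printing Implicit Defensive.
Import Order.TTheory GRing.Theory Num.Theory.
Local Open Scope ring_scope.

Notation CC := (complex Rdefinitions.R).

Fixpoint Ppair (rho beta tau : nat -> CC) (n : nat) : {poly CC} * {poly CC} :=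
  match n with
  | 0 => (1, (rho 0%N)%:P * ('X - (beta 0%N)%:P))
  | m.+1 =>
      let '(a, b) := Ppair rho beta tau m in
      (b, (rho m.+1)%:P * ('X - (beta m.+1)%:P) * b + (tau m.+1)%:P * 'X * a)
  end.

Definition Ppoly (rho beta tau : nat -> CC) (n : nat) : {poly CC} :=
  (Ppair rho beta tau n).1.

Definition alphaC (alpha : nat -> Rdefinitions.R) (n : nat) : CC :=
  ((alpha n)%:C)%C.

Definition Qpoly (rho beta tau : nat -> CC) (alpha : nat -> Rdefinitions.R)
    (n : nat) : {poly CC} :=
  match n with
  | 0 => 1
  | m.+1 => Ppoly rho beta tau m.+1 + (alphaC alpha m.+1)%:P * Ppoly rho beta tau m
  end.

Definition pcoef (rho tau : nat -> CC) (alpha : nat -> Rdefinitions.R) (n : nat) : CC :=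
  alphaC alpha n.-1 * rho n.-1 - tau n.-1.
Definition qcoef (rho beta : nat -> CC) (alpha : nat -> Rdefinitions.R) (n : nat) : CC :=
  alphaC alpha n.-1 * (alphaC alpha n - rho n.-1 * beta n.-1).

From HB Require Import structures.
From mathcomp Require Import all_boot all_order all_algebra.
From mathcomp Require Import complex.
From mathcomp Require Import Rstruct.
From mathcomp Require Import ring.
Set Implicit Arguments. Unset Strict Implicit. Unset Printing Implicit Defensive.
Import Order.TTheory GRing.Theory Num.Theory.
Local Open Scope ring_scope.

(* The whole argument rests on the identity
     Q_{n+1} = (rho_n (X - beta_n) + alpha_{n+1}) Q_n - (p_{n+1} X + q_{n+1}) P_{n-1},
   valid for any sequences, together with the observation that the recursion
   defining alpha_{n+1} says exactly p_{n+1} + q_{n+1} = 0, i.e. that the linear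
   factor p_{n+1} X + q_{n+1} vanishes at 1. Hence a zero of Q_n at 1 propagates
   to Q_{n+1}; and at a common zero z of Q_n and Q_{n+1}, P_{n-1}(z) <> 0 because
   consecutive P's have no common zero, so p_{n+1} z + q_{n+1} = 0 = p_{n+1} + q_{n+1}
   and z = 1. For n = 1 the identity gives Q_2 = (X - 1) S with S linear, and S(1)
   is a nonzero multiple of rho_1 alpha_1^2 - rho_0 beta_0 tau_1. *)

Section Recurrence.
Variables (rho beta tau : nat -> CC) (alpha : nat -> Rdefinitions.R).
Local Notation P := (Ppoly rho beta tau).
Local Notation Q := (Qpoly rho beta tau alpha).
Local Notation a := (alphaC alpha).
Local Notation p := (pcoef rho tau alpha).
Local Notation q := (qcoef rho beta alpha).

Lemma Ppoly0 : P 0 = 1.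
Proof. by []. Qed.

Lemma Ppoly1 : P 1 = (rho 0%N)%:P * ('X - (beta 0%N)%:P).
Proof. by []. Qed.

Lemma PpolySS m :
  P m.+2 = (rho m.+1)%:P * ('X - (beta m.+1)%:P) * P m.+1 + (tau m.+1)%:P * 'X * P m.
Proof. by rewrite /Ppoly /=; case: (Ppair rho beta tau m). Qed.

Lemma QpolyS m : Q m.+1 = P m.+1 + (a m.+1)%:P * P m.
Proof. by []. Qed.

Lemma QpolySS m :
  Q m.+2 = ((rho m.+1)%:P * ('X - (beta m.+1)%:P) + (a m.+2)%:P) * Q m.+1
           - ((p m.+2)%:P * 'X + (q m.+2)%:P) * P m.
Proof. by rewrite !QpolyS PpolySS /pcoef /qcoef /= !(rmorphB, rmorphM) /=; ring. Qed.

Lemma pcoef_add_qcoef_eq0 n : a n != 0 ->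
  a n.+1 = - (rho n - (a n)^-1 * tau n) + rho n * beta n -> p n.+1 + q n.+1 = 0.
Proof. by move=> an0 aE; rewrite /pcoef /qcoef /= aE; field. Qed.

Lemma root1_Qpoly : (forall n, p n.+2 + q n.+2 = 0) ->
  root (Q 1) 1 -> forall m, root (Q m.+1) 1.
Proof.
move=> pq0 Q1 m; elim: m => [|m IH] //.
move: IH; rewrite /root QpolySS !hornerE => /eqP->.
by rewrite pq0 mulr0 mul0r subrr.
Qed.

Lemma Qpoly1_root1E : root (Q 1) 1 -> Q 1 = (rho 0%N)%:P * ('X - 1).
Proof.
rewrite QpolyS Ppoly1 Ppoly0 /root !hornerE addrC addr_eq0 => /eqP->.
by rewrite !(rmorphN, rmorphM, rmorphB) /=; ring.
Qed.

Lemma Qpoly2_double_root : a 1%N != 0 -> root (Q 1) 1 ->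
  a 2%N = - (rho 1%N - (a 1%N)^-1 * tau 1%N) + rho 1%N * beta 1%N ->
  rho 1%N * a 1%N ^+ 2 - rho 0%N * beta 0%N * tau 1%N = 0 ->
  ('X - 1) ^+ 2 %| Q 2.
Proof.
move=> a1n0 Q1 a2E hc.
have pq0 : p 2 + q 2 = 0 by exact: pcoef_add_qcoef_eq0.
set S := (rho 0%N)%:P * ((rho 1%N)%:P * ('X - (beta 1%N)%:P) + (a 2%N)%:P) - (p 2)%:P.
have Q2E : Q 2 = ('X - 1) * S.
  have q2E : q 2 = - p 2 by apply/eqP; rewrite -addr_eq0 addrC pq0.
  rewrite QpolySS Qpoly1_root1E // Ppoly0 q2E /S rmorphN /=; ring.
have rootS : root S 1.
  have b0E : rho 0%N * beta 0%N = rho 0%N + a 1%N.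
    move: Q1; rewrite QpolyS Ppoly1 Ppoly0 /root !hornerE => /eqP Q1.
    by rewrite -[RHS]subr0 -Q1; ring.
  rewrite b0E in hc; rewrite /root /S !hornerE a2E /pcoef /=; apply/eqP.
  transitivity (- (a 1%N)^-1 * (rho 1%N * a 1%N ^+ 2 - (rho 0%N + a 1%N) * tau 1%N)).
    by field.
  by rewrite hc mulr0.
by rewrite Q2E expr2 dvdp_mul // -polyC1 -root_factor_theorem.
Qed.

Hypotheses (rho_neq0 : forall n, rho n != 0) (tau_neq0 : forall n, tau n != 0)
  (beta_neq0 : forall n, beta n != 0).

Lemma horner0_Ppoly_neq0 m : (P m).[0] != 0.
Proof.
suff: (P m).[0] != 0 /\ (P m.+1).[0] != 0 by case.
elim: m => [|m [_ IH]].
  by rewrite Ppoly0 Ppoly1 !hornerE oner_neq0 mulrN oppr_eq0 mulf_neq0.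
by split=> //; rewrite PpolySS !hornerE mulrN mulNr oppr_eq0 !mulf_neq0.
Qed.

Lemma Ppoly_no_common_root m z : root (P m) z -> ~~ root (P m.+1) z.
Proof.
have [->|z_neq0] := eqVneq z 0; first by rewrite /root (negbTE (horner0_Ppoly_neq0 m)).
elim: m => [|m IH]; first by rewrite /root Ppoly0 hornerE oner_eq0.
move=> Pm1z; apply/negP; rewrite /root PpolySS !hornerE (eqP Pm1z) mulr0 add0r.
rewrite !mulf_eq0 (negbTE (tau_neq0 _)) (negbTE z_neq0) /= => Pmz.
by move: (IH Pmz); rewrite Pm1z.
Qed.

Lemma Qpoly_common_root m z :
  root (Q m.+1) z -> root (Q m.+2) z -> p m.+2 * z + q m.+2 = 0.
Proof.
move=> /eqP Q1z; rewrite /root QpolySS hornerD hornerN !hornerM Q1z mulr0 sub0r.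
rewrite oppr_eq0 mulf_eq0 !hornerE => /orP[/eqP //|Pmz].
case/negP: (Ppoly_no_common_root Pmz).
by move: Q1z; rewrite QpolyS /root !hornerE (eqP Pmz) mulr0 addr0 => ->.
Qed.

Lemma Qpoly_common_root_eq1 m z : p m.+2 != 0 -> p m.+2 + q m.+2 = 0 ->
  root (Q m.+1) z -> root (Q m.+2) z -> z = 1.
Proof.
move=> p_neq0 pq0 Q1z Q2z; move: (Qpoly_common_root Q1z Q2z).
by rewrite -pq0 => /addIr; rewrite -{2}[p m.+2]mulr1 => /(mulfI p_neq0).
Qed.

End Recurrence.

Theorem mainTheorem3 (rho beta tau : nat -> CC) (alpha : nat -> Rdefinitions.R)
  (hrho : forall n, rho n != 0) (htau : forall n, tau n != 0)
  (hbeta0 : beta 0%N != 0) (hbeta0p : beta 0%N != 1) (hbeta0m : beta 0%N != -1)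
  (hbeta : forall n, (1 <= n)%N -> beta n != 0)
  (halpha : forall n, alpha n != 0)
  (halpha0 : alphaC alpha 0 = tau 0%N / rho 0%N)
  (halpha1 : alphaC alpha 1 != rho 0%N * beta 0%N)
  (halphan : forall n, (2 <= n)%N ->
     alphaC alpha n = - (rho n.-1 - (alphaC alpha n.-1)^-1 * tau n.-1)
                      + rho n.-1 * beta n.-1)
  (hp : forall n, (1 <= n)%N -> pcoef rho tau alpha n.+1 != 0)
  (hq : forall n, (1 <= n)%N -> qcoef rho beta alpha n != 0)
  (hQ1 : root (Qpoly rho beta tau alpha 1) 1) :
  (forall n, (2 <= n)%N -> root (Qpoly rho beta tau alpha n) 1) /\
  (rho 1%N * alphaC alpha 1 ^+ 2 - rho 0%N * beta 0%N * tau 1%N = 0 ->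
     (('X - 1) ^+ 2 %| Qpoly rho beta tau alpha 2)%R) /\
  (~~ (('X - 1) ^+ 2 %| Qpoly rho beta tau alpha 2)%R ->
     forall n, (2 <= n)%N -> forall z : CC,
       root (Qpoly rho beta tau alpha n) z ->
       root (Qpoly rho beta tau alpha n.-1) z -> z = 1).
Proof.
have a_neq0 n : alphaC alpha n != 0 by rewrite /alphaC fmorph_eq0.
have beta_neq0 n : beta n != 0 by case: n => // n; exact: hbeta.
have pq0 n : pcoef rho tau alpha n.+2 + qcoef rho beta alpha n.+2 = 0.
  exact: pcoef_add_qcoef_eq0 (a_neq0 _) (halphan n.+2 isT).
split; [|split].
- by case=> [|[|m]] // _; exact: root1_Qpoly.
- exact: Qpoly2_double_root (a_neq0 1%N) hQ1 (halphan 2%N isT).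
-
  move=> _ [|[|m]] // _ z Qz Qz'.
  exact: (Qpoly_common_root_eq1 hrho htau beta_neq0 (hp m.+1 isT) (pq0 m) Qz' Qz).
Qed.
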